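(* Let $X$ be an ideally $\mathsf{T_{z}S}$-closed semigroup and $e\in E(X)\cap Z(X)$ an idempotent such that the semigroup $H_e\cap Z(X)$ is bounded. Then the set $\big(\sqrt[\infty]{H_e}\cap Z(X)\big)\setminus H_e$ is finite.
   Context: $\mathsf{T_{z}S}$ is the class of Hausdorff zero-dimensional topological semigroups; a semigroup is $\mathsf{T_{z}S}$-closed if for every isomorphic topological embedding of it (discrete topology) into some $Y\in\mathsf{T_{z}S}$ the image is closed in $Y$. $X$ is ideally $\mathsf{T_{z}S}$-closed if for every ideal $I\subseteq X$ (possibly empty; $IX\cup XI\subseteq I$) the Rees quotient $X/I$ (collapsing $I$ to one point, $X/\emptyset=X$) is $\mathsf{T_{z}S}$-closed. $E(X)$: idempotents; $H_e$: maximal subgroup containing $e$; $Z(X)$: center; $\sqrt[\infty]{H_e}=\{x\in X:\exists n\in\mathbb N\ (x^n\in H_e)\}$. A semigroup is bounded if there is $n\ge1$ with $x^n$ idempotent for all $x$. *)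

From HB Require Import structures.
From mathcomp Require Import all_boot all_order.
From mathcomp Require Import all_classical all_reals all_analysis.
Set Implicit Arguments. Unset Strict Implicit. Unset Printing Implicit Defensive.
Local Open Scope classical_set_scope.

Definition assoc_op (S : Type) (m : S -> S -> S) : Prop :=
  forall a b c, m a (m b c) = m (m a b) c.

Definition zero_dim (Y : topologicalType) : Prop :=
  forall (U : set Y) (y : Y), open U -> U y ->
    exists V : set Y, [/\ clopen V, V y & V `<=` U].

Definition TzS (Y : topologicalType) (m : Y -> Y -> Y) : Prop :=
  [/\ assoc_op m, hausdorff_space Y, zero_dim Y &
      continuous (fun p : Y * Y => m p.1 p.2)].

(* A semigroup is given by a carrier A : set S closed under mul
   (associativity of mul on A is part of the context). *)
Definition TzS_closed (S : Type) (A : set S) (mul : S -> S -> S) : Prop :=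
  forall (Y : topologicalType) (m : Y -> Y -> Y), TzS m ->
  forall h : S -> Y,
    {in A &, injective h} ->
    (forall a b, A a -> A b -> h (mul a b) = m (h a) (h b)) ->
    (* h(A) is a discrete subspace of Y, i.e. h is a topological embedding
       of the discrete space A *)
    (forall a, A a -> exists U : set Y, open U /\ U `&` (h @` A) = [set h a]) ->
    closed (h @` A).

(* Ideals (possibly empty) of the semigroup (X, mul) with carrier the whole type. *)
Definition is_ideal (X : Type) (mul : X -> X -> X) (I : set X) : Prop :=
  forall x y, I y -> I (mul x y) /\ I (mul y x).

(* Rees quotient X/I, carried by option X: Some x for x \notin I, and None
   standing for the collapsed ideal I (present only if I is nonempty).
   For I empty this is a copy of X. *)
Definition rees_carrier (X : Type) (I : set X) : set (option X) :=
  fun o => match o with Some x => ~ I x | None => I !=set0 end.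

Definition rees_mul (X : Type) (mul : X -> X -> X) (I : set X)
  (o1 o2 : option X) : option X :=
  match o1, o2 with
  | Some a, Some b => if `[< I (mul a b) >] then None else Some (mul a b)
  | _, _ => None
  end.

Definition ideally_TzS_closed (X : Type) (mul : X -> X -> X) : Prop :=
  forall I : set X, is_ideal mul I -> TzS_closed (rees_carrier I) (rees_mul mul I).

Definition idempotent_el (X : Type) (mul : X -> X -> X) (x : X) : Prop :=
  mul x x = x.

Definition sg_center (X : Type) (mul : X -> X -> X) : set X :=
  [set z | forall x, mul z x = mul x z].

(* H_e: the maximal subgroup containing the idempotent e, i.e. the group of
   units of the monoid eXe. *)
Definition maxsubgroup (X : Type) (mul : X -> X -> X) (e : X) : set X :=
  [set x | mul e x = x /\ mul x e = x /\
           exists y, [/\ mul e y = y, mul y e = y, mul x y = e & mul y x = e]].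

(* spow mul x n = x^(n+1) *)
Fixpoint spow (X : Type) (mul : X -> X -> X) (x : X) (n : nat) : X :=
  match n with 0 => x | n'.+1 => mul (spow mul x n') x end.

Definition inf_root (X : Type) (mul : X -> X -> X) (H : set X) : set X :=
  [set x | exists n : nat, H (spow mul x n)].

Definition bounded_on (X : Type) (mul : X -> X -> X) (A : set X) : Prop :=
  exists n : nat, forall x, A x -> idempotent_el mul (spow mul x n).

From HB Require Import structures.
From mathcomp Require Import all_boot all_order.
From mathcomp Require Import all_classical all_reals all_analysis.
From mathcomp Require Import zify.
Set Implicit Arguments. Unset Strict Implicit. Unset Printing Implicit Defensive.
Local Open Scope classical_set_scope.
Local Open Scope card_scope.

(* 1. Algebra of H_e: eX is an ideal; it misses T (a central element of eX
      with a power in H_e is in H_e), while every t ∈ T has a power in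
      H_e ⊆ eX.
   2. Combinatorics: an infinite central set outside an ideal E whose elements
      have powers in E yields a "nil family" (J, N): an ideal J and an infinite
      central set N outside J with N N ⊆ J.  The proof uses free ultrafilters
      and an ultrafilter form of Ramsey's theorem to extract N.
   3. Topology: for a nil family, X/J embeds as a non-closed discrete
      subsemigroup into a Hausdorff zero-dimensional topological semigroup,
      namely a space of ultrafilters on X/J with the convolution product;
      hence X/J is not TzS-closed, contradicting the hypothesis. *)

Definition is_ultra (T : Type) (q : set (set T)) : Prop :=
  [/\ q setT, ~ q set0, (forall A B, q A -> q B -> q (A `&` B)),
      (forall A B, A `<=` B -> q A -> q B) & (forall A, q A \/ q (~` A))].

Section UltraFacts.
Variables (T : Type) (q : set (set T)).
Hypothesis uq : is_ultra q.

Lemma ultraT : q setT. Proof. by case: uq. Qed.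
Lemma ultra_neq0 : ~ q set0. Proof. by case: uq. Qed.
Lemma ultraI A B : q A -> q B -> q (A `&` B).
Proof. by case: uq => _ _ + _ _; apply. Qed.
Lemma ultraS A B : A `<=` B -> q A -> q B.
Proof. by case: uq => _ _ _ + _; apply. Qed.
Lemma ultraNC A : ~ q A -> q (~` A).
Proof. by case: uq => _ _ _ _ /(_ A) []. Qed.

Lemma ultra_inhabited A : q A -> exists x, A x.
Proof.
move=> qA; apply: contrapT => nA; apply: ultra_neq0.
by apply: ultraS qA => x Ax; apply: nA; exists x.
Qed.

Lemma ultra_meet A B : q A -> q B -> (forall x, A x -> B x -> False) -> False.
Proof. by move=> qA qB AB; have [x [Ax Bx]] := ultra_inhabited (ultraI qA qB); exact: AB Ax Bx. Qed.

Lemma ultra_finite_cover (I : Type) (W : set I) (F : I -> set T) (A : set T) :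
  finite_set W -> q A -> (forall x, A x -> exists2 i, W i & F i x) ->
  exists2 i, W i & q (F i).
Proof.
elim/Pchoice: I => I in W F *.
move=> /finite_seqP [s ->]; elim: s A => [|a s IH] A qA covA.
  by have [x /covA [i]] := ultra_inhabited qA.
have [qFa|nqFa] := pselect (q (F a)); first by exists a => //=; rewrite inE eqxx.
have [i si qFi] : exists2 i, [set` s] i & q (F i).
  apply: (IH (A `&` ~` F a)); first exact: ultraI qA (ultraNC nqFa).
  move=> x [/covA [i /= + Fix] nFax]; rewrite inE => /orP [/eqP eia|si].
    by rewrite eia in Fix.
  by exists i.
by exists i => //=; rewrite inE si orbT.
Qed.

Lemma ultra_finite_image (U : Type) (f : T -> U) (A : set T) :
  finite_set (f @` A) -> q A -> exists2 w, (f @` A) w & q (A `&` f @^-1` [set w]).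
Proof.
move=> finfA qA; apply: (ultra_finite_cover finfA qA) => x Ax.
by exists (f x); [exists x|].
Qed.

End UltraFacts.

Definition principal (T : Type) (a : T) : set (set T) := fun A => A a.

Lemma principal_ultra T (a : T) : is_ultra (principal a).
Proof.
split; rewrite /principal //.
- by move=> A B AB; apply: AB.
- by move=> A; have [Aa|nAa] := pselect (A a); [left|right].
Qed.

Definition push (T U : Type) (f : T -> U) (q : set (set T)) : set (set U) :=
  fun A => q (f @^-1` A).

Lemma push_ultra T U (f : T -> U) q : is_ultra q -> is_ultra (push f q).
Proof.
move=> uq; split; rewrite /push.
- by rewrite preimage_setT; exact: ultraT uq.
- by rewrite preimage_set0; exact: ultra_neq0 uq.
- by move=> A B qA qB; exact: (ultraI uq qA qB).
- by move=> A B AB; apply: (ultraS uq) => x; apply: AB.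
- by move=> A; case: uq => _ _ _ _ /(_ (f @^-1` A)).
Qed.

Definition convolution (T : Type) (f : T -> T -> T) (P Q : set (set T)) : set (set T) :=
  fun A => P (fun a => Q (fun b => A (f a b))).

Lemma convolutionA T (f : T -> T -> T) : (forall a b c, f (f a b) c = f a (f b c)) ->
  forall P Q R, convolution f (convolution f P Q) R = convolution f P (convolution f Q R).
Proof.
move=> fA P Q R; apply: funext => A; congr P; apply: funext => a; congr Q.
by apply: funext => b; congr R; apply: funext => c; rewrite fA.
Qed.

Lemma free_ultra_exists (T : Type) (D : set T) : infinite_set D ->
  exists q : set (set T), [/\ is_ultra q, q D & forall x, ~ q [set x]].
Proof.
move=> infD; pose F : set (set T) := fun A => finite_set (D `\` A).
have FF : ProperFilter F.
  apply: Build_ProperFilter_ex.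
    move=> A finDA; apply: contrapT => nA; apply: infD.
    by apply: sub_finite_set finDA => x Dx; split => // Ax; apply: nA; exists x.
  constructor; first by rewrite /F setDT; exact: finite_set0.
  - move=> A B finA finB; apply: (sub_finite_set (B := (D `\` A) `|` (D `\` B))).
      by move=> x [Dx nAB]; have [Ax|] := pselect (A x); [right; split => // Bx; apply: nAB|left].
    by rewrite finite_setU.
  - move=> A B AB; apply: sub_finite_set => x [Dx nB]; split => // Ax.
    by apply: nB; apply: AB.
have [G [UG FG]] := ultraFilterLemma FF.
have uG : is_ultra G.
  split; [exact: filterT|exact: filter_not_empty|by move=> ? ?; apply: filterI|
          by move=> ? ?; apply: filterS|by move=> A; apply: in_ultra_setVsetC].
exists G; split => //; first by apply: FG; rewrite /F setDv; exact: finite_set0.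
move=> x Gx; have Gnx : G (~` [set x]).
  by apply: FG; apply: sub_finite_set (finite_set1 x) => y [Dy /= ny]; apply: contrapT.
by apply: (ultra_meet uG Gx Gnx).
Qed.

Lemma infinite_range (T : Type) (b : nat -> T) : injective b -> infinite_set (range b).
Proof.
move=> inj_b fin_b; apply: infinite_nat.
have : finite_set (b @^-1` range b) by apply: finite_preimage => // x y _ _; apply: inj_b.
by apply: sub_finite_set => n _; exists n.
Qed.

Lemma infinite_fiber (T U : Type) (f : T -> U) (A : set T) :
  finite_set (f @` A) -> infinite_set A ->
  exists2 u, (f @` A) u & infinite_set (A `&` f @^-1` [set u]).
Proof.
move=> finfA infA; apply: contrapT => nfib; apply: infA.
apply: (sub_finite_set (B := \bigcup_(u in f @` A) (A `&` f @^-1` [set u]))).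
  by move=> x Ax; exists (f x); [exists x|].
apply: bigcup_finite => // u fAu; apply: contrapT => infu; apply: nfib; by exists u.
Qed.

(* An ultrafilter version of Ramsey's theorem: if a free ultrafilter p contains
   R and, for every b in R, p-most u satisfy rel b u, then R contains an
   infinite set any two distinct points of which are rel-related (in some
   order).  The set is the range of a sequence chosen greedily. *)
Section UltraChain.
Variables (T : Type) (p : set (set T)) (R : set T) (rel : T -> T -> Prop).
Hypotheses (up : is_ultra p) (p_free : forall x, ~ p [set x]) (pR : p R).
Hypothesis p_rel : forall b, R b -> p [set u | rel b u].

(* Admissible successors of the finite set S of already chosen terms. *)
Definition successors (S : set T) : set T :=
  [set x | [/\ R x, forall b, S b -> rel b x & ~ S x]].

Lemma successors_setU1 S a : R a -> p (successors S) -> p (successors (S `|` [set a])).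
Proof.
move=> Ra pS; have pSa := ultraI up (ultraI up pS (p_rel Ra)) (ultraNC up (@p_free a)).
apply: (ultraS up _ pSa) => x [[[Rx Sx nSx] rax] nax]; split => //.
- by move=> b [/Sx //|->].
- by case.
Qed.

Let point : T := projT1 (cid (ultra_inhabited up pR)).

Definition next (S : set T) : T :=
  if pselect (exists x, successors S x) is left h then projT1 (cid h) else point.

Lemma nextP S : p (successors S) -> successors S (next S).
Proof.
rewrite /next => pS; case: pselect => [h|[]]; first exact: projT2 (cid h).
exact: (ultra_inhabited up pS).
Qed.

Fixpoint prefix (n : nat) : set T :=
  if n is n'.+1 then prefix n' `|` [set next (prefix n')] else set0.

Definition chain (n : nat) : T := next (prefix n).

Lemma prefix_successors n : p (successors (prefix n)).
Proof.
elim: n => [|n IH] /=; first by apply: (ultraS up _ pR) => x Rx; split.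
by apply: successors_setU1 => //; have [] := nextP IH.
Qed.

Lemma chainP n : successors (prefix n) (chain n).
Proof. exact: nextP (prefix_successors n). Qed.

Lemma prefix_chain m n : (m < n)%N -> prefix n (chain m).
Proof.
elim: n => [//|n IH]; rewrite ltnS leq_eqVlt => /orP [/eqP ->|/IH]; by [right|left].
Qed.

Lemma ultra_chain : exists N : set T, [/\ infinite_set N, N `<=` R &
  forall b b', N b -> N b' -> b <> b' -> rel b b' \/ rel b' b].
Proof.
have chain_lt m n : (m < n)%N -> chain m <> chain n /\ rel (chain m) (chain n).
  move=> mn; have [_ rel_n nprefix] := chainP n; split; last exact/rel_n/prefix_chain.
  by move=> cmn; apply: nprefix; rewrite -cmn; apply: prefix_chain.
exists (range chain); split.
- apply: infinite_range => m n cmn.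
  by case: (ltngtP m n) => // /chain_lt [] // /(_ (esym cmn)).
- by move=> _ [n _ <-]; have [] := chainP n.
- move=> _ _ [m _ <-] [n _ <-] cmn; case: (ltngtP m n) => [/chain_lt|/chain_lt|mn].
  + by case=> _; left.
  + by case=> _; right.
  + by rewrite mn in cmn.
Qed.

End UltraChain.

(* Points of the space used to witness non-closedness: the principal
   ultrafilters on option X together with the ultrafilters containing the
   copy Some @` D of a set D ⊆ X. *)
Definition supported (X : Type) (D : set X) (P : set (set (option X))) : Prop :=
  (exists a, P = principal a) \/ (is_ultra P /\ P (Some @` D)).

Lemma supported_ultra X (D : set X) P : supported D P -> is_ultra P.
Proof. by case=> [[a ->]|[]] //; apply: principal_ultra. Qed.

Definition ultra_space (X : Type) (D : set X) := {P | @supported X D P}.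
HB.instance Definition _ X D := gen_eqMixin (@ultra_space X D).
HB.instance Definition _ X D := gen_choiceMixin (@ultra_space X D).

Lemma ultra_spaceP X D (P : @ultra_space X D) : is_ultra (sval P).
Proof. exact: supported_ultra (svalP P). Qed.

Lemma ultra_space_eq X D (P Q : @ultra_space X D) : sval P = sval Q -> P = Q.
Proof. by apply: eq_sig_hprop => x; exact: Prop_irrelevance. Qed.

Definition basic X D (A : set (option X)) : set (@ultra_space X D) :=
  [set P | sval P A].
Arguments basic {X} D A.

Definition ultra_open X D : set (set (@ultra_space X D)) :=
  [set O | forall P, O P -> exists A, sval P A /\ basic D A `<=` O].

Lemma ultra_openT X D : ultra_open (@setT (@ultra_space X D)).
Proof. by move=> P _; exists setT; split => //; exact: (ultraT (ultra_spaceP P)). Qed.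

Lemma ultra_openI X D : setI_closed (@ultra_open X D).
Proof.
move=> O O' oO oO' P [/oO [A [PA AO]] /oO' [B [PB BO']]].
exists (A `&` B); split; first exact: (ultraI (ultra_spaceP P) PA PB).
move=> Q QAB; have uQ := ultra_spaceP Q.
by split; [apply: AO|apply: BO']; apply: (ultraS uQ _ QAB) => x [].
Qed.

Lemma ultra_openU X D (I : Type) (f : I -> set (@ultra_space X D)) :
  (forall i, ultra_open (f i)) -> ultra_open (\bigcup_i f i).
Proof.
move=> open_f P [i _ /open_f [A [PA Afi]]].
by exists A; split => // Q /Afi; exists i.
Qed.

HB.instance Definition _ X D :=
  isOpenTopological.Build (@ultra_space X D)
    (@ultra_openT X D) (@ultra_openI X D) (@ultra_openU X D).

Section UltraSpaceTopology.
Variables (X : Type) (D : set X).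
Local Notation Y := (@ultra_space X D).

Lemma basic_open (A : set (option X)) : open (basic D A).
Proof. by move=> P PA; exists A; split. Qed.

Lemma basicC (A : set (option X)) : ~` basic D A = basic D (~` A).
Proof.
apply/seteqP; split => P /=; rewrite /basic /=; first exact: (ultraNC (ultra_spaceP P)).
by move=> PnA PA; exact: (ultra_meet (ultra_spaceP P) PA PnA (fun x a na => na a)).
Qed.

Lemma basic_clopen (A : set (option X)) : clopen (basic D A).
Proof.
split; first exact: basic_open.
by rewrite -(setCK (basic D A)) closedC basicC; exact: basic_open.
Qed.

Lemma nbhs_basic (P : Y) (A : set (option X)) : sval P A -> nbhs P (basic D A).
Proof. by move=> PA; exists (basic D A); split => //; exact: basic_open. Qed.

Lemma nbhs_basicE (P : Y) (V : set Y) : nbhs P V -> exists A, sval P A /\ basic D A `<=` V.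
Proof.
move=> [B [oB BP BV]]; have [A [PA AB]] := oB P BP.
by exists A; split => //; exact: subset_trans BV.
Qed.

(* Distinct ultrafilters are separated by a set and its complement. *)
Lemma ultra_space_hausdorff : hausdorff_space Y.
Proof.
move=> P Q PQ; apply: ultra_space_eq; apply: funext => A; apply: propext.
have uP := ultra_spaceP P; have uQ := ultra_spaceP Q.
have separated B : sval P B -> sval Q (~` B) -> False.
  move=> PB QnB; have [R [RB RnB]] := PQ _ _ (nbhs_basic PB) (nbhs_basic QnB).
  exact: (ultra_meet (ultra_spaceP R) RB RnB (fun x b nb => nb b)).
split => [PA|QA]; apply: contrapT => nA.
- exact: (separated _ PA (ultraNC uQ nA)).
- apply: (separated _ (ultraNC uP nA)).
  by apply: (ultraS uQ _ QA) => x Ax; apply.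
Qed.

Lemma ultra_space_zero_dim : zero_dim Y.
Proof.
move=> U P oU UP; have [A [PA AU]] := oU P UP.
by exists (basic D A); split => //; exact: basic_clopen.
Qed.

End UltraSpaceTopology.

(* The convolution of ultrafilters along the Rees multiplication of X/J makes
   the space a topological semigroup, provided D is a two-sided "J-absorbing"
   set: its translates stay in D unless they fall into J, and D * D ⊆ J. *)
Section UltraSpaceSemigroup.
Variables (X : Type) (mul : X -> X -> X) (J D : set X).
Hypothesis mulA : assoc_op mul.
Hypothesis idealJ : is_ideal mul J.
Hypothesis D_mull : forall x d, D d -> ~ J (mul x d) -> D (mul x d).
Hypothesis D_mulr : forall x d, D d -> ~ J (mul d x) -> D (mul d x).
Hypothesis DD_J : forall d d', D d -> D d' -> J (mul d d').

Local Notation rees := (rees_mul mul J).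
Local Notation Y := (@ultra_space X D).

Lemma rees_in x y : J (mul x y) -> rees (Some x) (Some y) = None.
Proof. by move=> Jxy; rewrite /= asboolT. Qed.

Lemma rees_out x y : ~ J (mul x y) -> rees (Some x) (Some y) = Some (mul x y).
Proof. by move=> nJxy; rewrite /= asboolF. Qed.

Lemma reesA a b c : rees (rees a b) c = rees a (rees b c).
Proof.
case: a => [x|] //; case: b => [y|]; last by case: c.
case: c => [z|]; first last.
  by have [Jxy|nJxy] := pselect (J (mul x y)); [rewrite rees_in|rewrite rees_out].
have [Jxy|nJxy] := pselect (J (mul x y)); have [Jyz|nJyz] := pselect (J (mul y z)).
- by rewrite (rees_in Jxy) (rees_in Jyz).
- by rewrite (rees_in Jxy) (rees_out nJyz) rees_in // mulA; exact: (idealJ z Jxy).2.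
- by rewrite (rees_out nJxy) (rees_in Jyz) rees_in // -mulA; exact: (idealJ x Jyz).1.
- rewrite (rees_out nJxy) (rees_out nJyz).
  have [Jxyz|nJxyz] := pselect (J (mul x (mul y z))).
    by rewrite !rees_in // -mulA.
  by rewrite !rees_out -?mulA.
Qed.

Lemma push_supported (f : option X -> option X) (Q : set (set (option X))) :
  is_ultra Q -> Q (Some @` D) ->
  (forall d, D d -> f (Some d) = None \/ exists2 d', D d' & f (Some d) = Some d') ->
  supported D (push f Q).
Proof.
move=> uQ QD fD; have [QN|nQN] := pselect (Q (f @^-1` [set None])).
- left; exists None; apply: funext => A; apply: propext; rewrite /push /principal.
  split => [QA|AN]; last by apply: (ultraS uQ _ QN) => b /= ->.
  apply: contrapT => nAN; apply: (ultra_meet uQ QA QN) => b fbA fbN.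
  by apply: nAN; rewrite -fbN.
- right; split; first exact: push_ultra.
  apply: (ultraS uQ _ (ultraI uQ QD (ultraNC uQ nQN))) => _ [[d Dd <-] /= nfd].
  by case: (fD d Dd) => [//|[d' Dd' ->]]; exists d'.
Qed.

Lemma convolution_supported_D P Q : is_ultra P -> is_ultra Q ->
  P (Some @` D) -> Q (Some @` D) -> convolution rees P Q = principal None.
Proof.
move=> uP uQ PD QD; apply: funext => A; apply: propext; rewrite /convolution /principal.
split => [PA|AN].
- apply: contrapT => nAN; apply: (ultra_meet uP PA PD) => a QA [d Dd da].
  apply: (ultra_meet uQ QA QD) => b + [d' Dd' db].
  by rewrite -da -db rees_in //; exact: DD_J.
- apply: (ultraS uP _ PD) => _ [d Dd <-]; apply: (ultraS uQ _ QD) => _ [d' Dd' <-].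
  by rewrite rees_in //; exact: DD_J.
Qed.

Lemma convolution_supported P Q :
  supported D P -> supported D Q -> supported D (convolution rees P Q).
Proof.
move=> [[a ->]|[uP PD]] [[b ->]|[uQ QD]].
- by left; exists (rees a b).
- apply: (@push_supported (rees a)) => // d Dd; case: a => [x|]; last by left.
  have [Jxd|nJxd] := pselect (J (mul x d)); first by left; rewrite rees_in.
  by right; exists (mul x d); [exact: D_mull|rewrite rees_out].
- apply: (@push_supported (rees^~ b)) => // d Dd; case: b => [y|]; last by left.
  have [Jdy|nJdy] := pselect (J (mul d y)); first by left; rewrite rees_in.
  by right; exists (mul d y); [exact: D_mulr|rewrite rees_out].
- by left; exists None; exact: convolution_supported_D.
Qed.

Definition ultra_mul (P Q : Y) : Y :=
  exist _ (convolution rees (sval P) (sval Q)) (convolution_supported (svalP P) (svalP Q)).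

Lemma ultra_mulA : assoc_op ultra_mul.
Proof. by move=> P Q R; apply: ultra_space_eq; rewrite /= convolutionA // => *; rewrite reesA. Qed.

(* Continuity at (P, Q): if P (or Q) is principal at a, the product depends
   only on the other factor near a; if both are free, the product is None
   and Some @` D × Some @` D is mapped to None. *)
Lemma ultra_mul_continuous : continuous (fun PQ : Y * Y => ultra_mul PQ.1 PQ.2).
Proof.
move=> [P Q] V /nbhs_basicE [C [/= PQC CV]].
suff [A [B [PA QB AB_C]]] : exists A B, [/\ sval P A, sval Q B &
    forall P' Q' : Y, sval P' A -> sval Q' B -> sval (ultra_mul P' Q') C].
  exists (basic D A, basic D B); first by split; exact: nbhs_basic.
  by move=> [P' Q'] [/= P'A Q'B]; apply: CV; exact: AB_C.
case: (svalP P) => [[a Pa]|[uP PD]].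
  exists [set a], (fun b => C (rees a b)); rewrite Pa /principal; split => //.
    by move: PQC; rewrite Pa.
  move=> P' Q' P'a Q'C /=; apply: (ultraS (ultra_spaceP P') _ P'a) => a' /= ->.
  exact: Q'C.
case: (svalP Q) => [[b Qb]|[uQ QD]].
  exists (fun a => C (rees a b)), [set b]; rewrite Qb /principal; split => //.
    by move: PQC; rewrite Qb.
  move=> P' Q' P'C Q'b /=; apply: (ultraS (ultra_spaceP P') _ P'C) => a' /= aC.
  by apply: (ultraS (ultra_spaceP Q') _ Q'b) => b' /= ->.
have CN : C None by move: PQC; rewrite convolution_supported_D.
exists (Some @` D), (Some @` D); split => // P' Q' P'D Q'D /=.
apply: (ultraS (ultra_spaceP P') _ P'D) => _ [d Dd <-].
apply: (ultraS (ultra_spaceP Q') _ Q'D) => _ [d' Dd' <-].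
by rewrite rees_in //; exact: DD_J.
Qed.

Lemma ultra_space_TzS : TzS ultra_mul.
Proof.
split; [exact: ultra_mulA|exact: ultra_space_hausdorff|
        exact: ultra_space_zero_dim|exact: ultra_mul_continuous].
Qed.

End UltraSpaceSemigroup.

(* If moreover D is infinite and disjoint from J, then X/J is not TzS-closed:
   X/J embeds into the ultrafilter space as the principal ultrafilters, and a
   free ultrafilter containing D lies in the closure of the image. *)
Section ReesNotClosed.
Variables (X : Type) (mul : X -> X -> X) (J D : set X).
Hypothesis mulA : assoc_op mul.
Hypothesis idealJ : is_ideal mul J.
Hypothesis D_mull : forall x d, D d -> ~ J (mul x d) -> D (mul x d).
Hypothesis D_mulr : forall x d, D d -> ~ J (mul d x) -> D (mul d x).
Hypothesis DD_J : forall d d', D d -> D d' -> J (mul d d').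
Hypothesis D_nJ : forall d, D d -> ~ J d.
Hypothesis infD : infinite_set D.

Local Notation Y := (@ultra_space X D).
Local Notation mulY := (ultra_mul D_mull D_mulr DD_J).

Definition principal_pt (a : option X) : Y :=
  exist _ (principal a) (or_introl (ex_intro _ a erefl)).

Lemma principal_pt_inj : injective principal_pt.
Proof. by move=> a b /(congr1 sval) /= ab; have : principal a [set a] by []; rewrite ab. Qed.

Lemma principal_pt_mul a b :
  principal_pt (rees_mul mul J a b) = mulY (principal_pt a) (principal_pt b).
Proof. exact: ultra_space_eq. Qed.

Lemma principal_pt_discrete a : rees_carrier J a ->
  exists U : set Y, open U /\ U `&` (principal_pt @` rees_carrier J) = [set principal_pt a].
Proof.
move=> Ja; exists (basic D [set a]); split; first exact: basic_open.
apply/seteqP; split => [P [/= Pa [b _ bP]]|P ->]; last by split => //; exists a.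
by move: Pa; rewrite -bP /basic /principal /= => ->.
Qed.

Lemma rees_not_TzS_closed : ~ TzS_closed (rees_carrier J) (rees_mul mul J).
Proof.
move=> closed_rees.
have closed_img : closed (principal_pt @` rees_carrier J).
  apply: (closed_rees Y mulY (ultra_space_TzS mulA idealJ D_mull D_mulr DD_J)).
  - by move=> a b _ _; exact: principal_pt_inj.
  - by move=> a b _ _; exact: principal_pt_mul.
  - exact: principal_pt_discrete.
have [q [uq qD q_free]] := free_ultra_exists infD.
have supp_q : supported D (push Some q).
  by right; split; [exact: push_ultra|apply: (ultraS uq _ qD) => x Dx; exists x].
pose Q : Y := exist _ (push Some q) supp_q.
have /closed_img [a _ aQ] : closure (principal_pt @` rees_carrier J) Q.
  move=> B /nbhs_basicE [A [/= QA AB]].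
  have [x [Ax Dx]] := ultra_inhabited uq (ultraI uq QA qD).
  by exists (principal_pt (Some x)); split; [exists (Some x) => //=; exact: D_nJ|exact: AB].
have : push Some q [set a] by rewrite -[push _ _]/(sval Q) -aQ.
case: a {aQ} => [x|] /= qa.
- by apply: (q_free x); apply: (ultraS uq _ qa) => y /= [->].
- by apply: (ultra_neq0 uq); apply: (ultraS uq _ qa).
Qed.

End ReesNotClosed.

Section Semigroup.
Variables (X : Type) (mul : X -> X -> X).
Hypothesis mulA : assoc_op mul.
Local Notation Z := (sg_center mul).
Local Notation sp := (spow mul).

Lemma center_mul a b : Z a -> Z b -> Z (mul a b).
Proof. by move=> Za Zb x; rewrite -mulA Zb mulA Za -mulA. Qed.

Lemma ideal_mull J x y : is_ideal mul J -> J y -> J (mul x y).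
Proof. by move=> idealJ Jy; exact: (idealJ x y Jy).1. Qed.

Lemma ideal_mulr J x y : is_ideal mul J -> J x -> J (mul x y).
Proof. by move=> idealJ Jx; exact: (idealJ y x Jx).2. Qed.

Definition ideal_adjoin (J : set X) (u : X) : set X :=
  [set x | J x \/ x = u \/ exists z, x = mul u z].

Lemma ideal_adjoinP J u : is_ideal mul J -> Z u -> is_ideal mul (ideal_adjoin J u).
Proof.
move=> idealJ Zu x y [Jy|[->|[z ->]]]; split.
- by left; exact: ideal_mull.
- by left; exact: ideal_mulr.
- by right; right; exists x; rewrite Zu.
- by right; right; exists x.
- by right; right; exists (mul x z); rewrite mulA -Zu -mulA.
- by right; right; exists (mul z x); rewrite mulA.
Qed.

Lemma absorb_in_ideal J b c : is_ideal mul J -> J (mul c c) -> b = mul b c -> J b.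
Proof.
move=> idealJ Jcc bc; have -> : b = mul b (mul c c) by rewrite mulA -!bc.
exact: ideal_mull.
Qed.

Lemma spowSl t n : sp t n.+1 = mul t (sp t n).
Proof.
elim: n => [//|n IH].
by change (mul (sp t n.+1) t = mul t (sp t n.+1)); rewrite {1}IH -mulA.
Qed.

Lemma spow_add t a b : sp t (a + b).+1 = mul (sp t a) (sp t b).
Proof.
elim: b => [|b IH]; first by rewrite addn0.
rewrite addnS; change (mul (sp t (a + b).+1) t = mul (sp t a) (mul (sp t b) t)).
by rewrite IH mulA.
Qed.

Lemma center_spow t n : Z t -> Z (sp t n).
Proof. by move=> Zt; elim: n => [//|n IH] /=; exact: center_mul. Qed.

Lemma ideal_spow J t m n : is_ideal mul J -> J (sp t m) -> (m <= n)%N -> J (sp t n).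
Proof.
move=> idealJ Jm; elim: n => [|n IH]; first by rewrite leqn0 => /eqP <-.
rewrite leq_eqVlt => /orP [/eqP <- //|]; rewrite ltnS => /IH Jn /=.
exact: ideal_mulr.
Qed.

(* A nil family for J: an infinite set of central elements outside the ideal J
   all of whose pairwise products (squares included) lie in J.  Such a family
   makes the Rees quotient X/J non-closed. *)
Definition nil_family (J N : set X) : Prop :=
  [/\ is_ideal mul J, infinite_set N, N `<=` Z, (forall t, N t -> ~ J t) &
      (forall t t', N t -> N t' -> J (mul t t'))].

(* The witness set for a nil family N: the elements of N X¹ outside J.  It is
   closed under translations that avoid J, infinite, and D D ⊆ J. *)
Lemma nil_family_rees_not_closed J N : nil_family J N ->
  ~ TzS_closed (rees_carrier J) (rees_mul mul J).
Proof.
move=> [idealJ infN NZ N_nJ NN_J].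
pose D := [set w | ~ J w /\ exists2 t, N t & (w = t \/ exists z, w = mul t z)].
apply: (@rees_not_TzS_closed _ _ _ D mulA idealJ).
- move=> x d [_ [t Nt [->|[z ->]]]] nJ; split => //; exists t => //; right.
    by exists x; rewrite (NZ t Nt).
  by exists (mul x z); rewrite mulA -(NZ t Nt) -mulA.
- move=> x d [_ [t Nt [->|[z ->]]]] nJ; split => //; exists t => //; right.
    by exists x.
  by exists (mul z x); rewrite mulA.
- move=> d d' [_ [t Nt td]] [_ [t' Nt' td']].
  have Jtt' := NN_J t t' Nt Nt'.
  suff : (exists w, mul d d' = mul (mul t t') w) \/ mul d d' = mul t t'.
    by case=> [[w ->]|->] //; exact: ideal_mulr.
  case: td => [->|[z ->]]; case: td' => [->|[z' ->]].
  - by right.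
  - by left; exists z'; rewrite mulA.
  - by left; exists z; rewrite -mulA -(NZ t' Nt') mulA.
  - left; exists (mul z z').
    by rewrite -mulA [mul z (mul t' z')]mulA -(NZ t' Nt') -mulA mulA.
- by move=> d [].
- apply: (sub_infinite_set _ infN) => t Nt; split; first exact: N_nJ.
  by exists t => //; left.
Qed.

Definition multiples_off (J0 Q : set X) (b : X) : set X :=
  [set w | ~ J0 w /\ exists2 u, Q u & w = mul b u].

Lemma nil_family_multiples J0 Q b : is_ideal mul J0 -> Q `<=` Z ->
  (forall u, Q u -> J0 (mul u u)) -> Q b -> infinite_set (multiples_off J0 Q b) ->
  nil_family J0 (multiples_off J0 Q b).
Proof.
move=> idealJ0 QZ Q_sq Qb infP; split => //.
- by move=> w [_ [u Qu ->]]; apply: center_mul; exact: QZ.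
- by move=> w [].
- move=> _ _ [_ [u Qu ->]] [_ [u' Qu' ->]].
  rewrite -mulA [mul u (mul b u')]mulA -(QZ b Qb u) -mulA mulA.
  by apply: ideal_mulr => //; exact: Q_sq.
Qed.

Lemma nil_family_pairwise J0 N : is_ideal mul J0 -> infinite_set N -> N `<=` Z ->
  (forall t, N t -> ~ J0 t) -> (forall t, N t -> J0 (mul t t)) ->
  (forall t t', N t -> N t' -> t <> t' -> J0 (mul t t') \/ J0 (mul t' t)) ->
  nil_family J0 N.
Proof.
move=> idealJ0 infN NZ N_nJ N_sq N_rel; split => // t t' Nt Nt'.
have [<-|tt'] := pselect (t = t'); first exact: N_sq.
by case: (N_rel t t' Nt Nt' tt') => //; rewrite (NZ t Nt).
Qed.

Lemma nil_family_common_factor J0 W : is_ideal mul J0 -> infinite_set W -> W `<=` Z ->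
  (forall w, W w -> ~ J0 w) ->
  (forall w w', W w -> W w' -> exists b b' u,
     [/\ Z b', Z u, J0 (mul u u), w = mul b u & w' = mul b' u]) ->
  nil_family J0 W.
Proof.
move=> idealJ0 infW WZ W_nJ W_fac; split => // w w' Ww Ww'.
have [b [b' [u [Zb' Zu Juu -> ->]]]] := W_fac w w' Ww Ww'.
have -> : mul (mul b u) (mul b' u) = mul (mul b b') (mul u u).
  by rewrite -[RHS]mulA -mulA; congr (mul b); rewrite mulA -Zb' -mulA.
exact: ideal_mull.
Qed.

Lemma nil_family_constant_product J0 N w : is_ideal mul J0 -> infinite_set N ->
  N `<=` Z -> (forall t, N t -> ~ J0 t) -> (forall t, N t -> J0 (mul t t)) -> Z w ->
  (forall t t', N t -> N t' -> t <> t' -> mul t t' = w) ->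
  nil_family (ideal_adjoin J0 w) N.
Proof.
move=> idealJ0 infN NZ N_nJ N_sq Zw N_w; split => //.
- exact: ideal_adjoinP.
- move=> t Nt; have [t' [Nt' tt']] : exists t', N t' /\ t <> t'.
    apply: contrapT => nt'; apply: infN; apply: (sub_finite_set (B := [set t])) => // x Nx.
    by apply: contrapT => xt; apply: nt'; exists x; split => // tx; apply: xt.
  have Jt't' := N_sq t' Nt'; have ttw := N_w t t' Nt Nt' tt'.
  case=> [|[tw|[z tw]]]; first exact: N_nJ.
  + by apply: (N_nJ t Nt); apply: (absorb_in_ideal idealJ0 Jt't'); rewrite ttw.
  + apply: (N_nJ t Nt); apply: (@absorb_in_ideal _ t (mul t' z) idealJ0).
      rewrite -mulA [mul z (mul t' z)]mulA -(NZ t' Nt' z) -mulA mulA.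
      exact: ideal_mulr.
    by rewrite mulA ttw.
- move=> t t' Nt Nt'; have [<-|tt'] := pselect (t = t'); first by left; exact: N_sq.
  by right; left; exact: N_w.
Qed.

Lemma ultra_constant_multiple J0 Q p b : is_ultra p -> p Q -> Q `<=` Z -> Q b ->
  ~ p [set u | Q u /\ J0 (mul b u)] -> finite_set (multiples_off J0 Q b) ->
  exists w, [/\ Z w, ~ J0 w & p [set u | Q u /\ mul b u = w]].
Proof.
move=> up pQ QZ Qb npS finP; have pA := ultraI up pQ (ultraNC up npS).
have finA : finite_set (mul b @` (Q `&` ~` [set u | Q u /\ J0 (mul b u)])).
  apply: sub_finite_set finP => _ [u [Qu nS] <-].
  by split; [move=> J; apply: nS|exists u].
have [_ [u [Qu nSu] <-] pu] := ultra_finite_image up finA pA.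
exists (mul b u); split; first exact/center_mul/QZ/Qu/QZ.
  by move=> Jbu; apply: nSu.
by apply: (ultraS up _ pu) => v [[Qv _] /= ->].
Qed.

(* Fix a free ultrafilter p ∋ Q.  Unless some multiples_off is
   infinite (case 1), for p-most b either p-most u have bu ∈ J0 (a chain gives
   case 2), or bu is p-almost constant, = w_b; then either infinitely many
   w_b occur (case 3) or one value w occurs p-often (a chain gives case 4). *)
Lemma nil_family_of_square_nil J0 Q : is_ideal mul J0 -> infinite_set Q -> Q `<=` Z ->
  (forall u, Q u -> ~ J0 u) -> (forall u, Q u -> J0 (mul u u)) ->
  exists J N, nil_family J N.
Proof.
move=> idealJ0 infQ QZ Q_nJ Q_sq.
have [p [up pQ p_free]] := free_ultra_exists infQ.
have [[b Qb infP]|finP] := pselect (exists2 b, Q b & infinite_set (multiples_off J0 Q b)).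
  by exists J0, (multiples_off J0 Q b); exact: nil_family_multiples.
pose S b := [set u | Q u /\ J0 (mul b u)].
pose R := [set b | Q b /\ p (S b)].
have [pR|npR] := pselect (p R).
  have [N [infN NR N_rel]] := ultra_chain up p_free pR (rel := fun b u => J0 (mul b u))
    (fun b Rb => ultraS up (fun u (Su : S b u) => Su.2) Rb.2).
  exists J0, N; apply: nil_family_pairwise => //.
  - by move=> t /NR [/QZ].
  - by move=> t /NR [/Q_nJ].
  - by move=> t /NR [/Q_sq].
pose R' := Q `\` R.
have pR' : p R' by apply: (ultraS up _ (ultraI up pQ (ultraNC up npR))).
have /choice [wf wfP] : forall b, exists w, R' b ->
    [/\ Z w, ~ J0 w & p [set u | Q u /\ mul b u = w]].
  move=> b; have [[Qb nRb]|] := pselect (R' b); last by exists b.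
  have [w wP] := ultra_constant_multiple up pQ QZ Qb (fun pS => nRb (conj Qb pS))
    (contrapT (fun inf => finP (ex_intro2 _ _ b Qb inf))).
  by exists w.
have [finW|infW] := pselect (finite_set (wf @` R')); last first.
  exists J0, (wf @` R'); apply: nil_family_common_factor => //.
  - by move=> _ [b /wfP [] ? _ _ <-].
  - by move=> _ [b /wfP [] _ ? _ <-].
  move=> _ _ [b /wfP [_ _ pb] <-] [b' R'b' <-]; have [Zb' _ pb'] := wfP b' R'b'.
  have [u [[Qu bu] [_ b'u]]] := ultra_inhabited up (ultraI up pb pb').
  exists b, b', u; split; rewrite -?bu -?b'u //; [exact/QZ/R'b'.1|exact: QZ|exact: Q_sq].
have [_ [b0 R'b0 <-] pw] := ultra_finite_image up finW pR'.
have p_rel b : (R' `&` wf @^-1` [set wf b0]) b -> p [set u | mul b u = wf b0].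
  by move=> [/wfP [_ _ pb] <-]; apply: (ultraS up _ pb) => u [].
have [N [infN NR N_rel]] := ultra_chain up p_free pw p_rel.
have NQ : N `<=` Q by move=> t /NR [[]].
exists (ideal_adjoin J0 (wf b0)), N; apply: nil_family_constant_product => //.
- by move=> t /NQ /QZ.
- by move=> t /NQ /Q_nJ.
- by move=> t /NQ /Q_sq.
- by case: (wfP b0 R'b0).
- move=> t t' Nt Nt' tt'; case: (N_rel t t' Nt Nt' tt') => //.
  by rewrite (QZ t) //; exact: NQ.
Qed.

(* If t ∈ t²X¹ is central and some power of t lies in the ideal J, then
   t ∈ J, since t = t^k y for every k. *)
Lemma square_divisible_in_ideal J t m : is_ideal mul J -> Z t -> J (sp t m) ->
  ideal_adjoin set0 (mul t t) t -> J t.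
Proof.
move=> idealJ Zt Jm [//|[tt|[w tw]]].
  by have -> : t = sp t m by elim: m {Jm} => [//|m IH] /=; rewrite -IH.
have t_div k : exists y, t = mul (sp t k.+1) y.
  elim: k => [|k [y ty]]; first by exists w.
  rewrite -mulA in tw; exists (mul y w); rewrite {1}tw {1}ty -mulA.
  change (mul (sp t k.+1) (mul y (mul t w)) = mul (mul (sp t k.+1) t) (mul y w)).
  by rewrite -mulA; congr (mul (sp t k.+1)); rewrite mulA -Zt -mulA.
have [y ->] := t_div m; apply: ideal_mulr => //.
exact: ideal_spow idealJ Jm (leqnSn m).
Qed.

Lemma power_divisible_square_divisible t k : Z t ->
  ideal_adjoin set0 (sp t k.+1) t -> ideal_adjoin set0 (mul t t) t.
Proof.
move=> Zt t_div; have idealI : is_ideal mul (ideal_adjoin set0 (mul t t)).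
  by apply: ideal_adjoinP; [move=> ? ? []|exact: center_mul].
have Ik : ideal_adjoin set0 (mul t t) (sp t k.+1).
  elim: k {t_div} => [|k IH]; first by right; left.
  exact: ideal_mulr idealI IH.
case: t_div => [//|[tk|[z tz]]]; first by rewrite -tk in Ik.
by have := ideal_mulr z idealI Ik; rewrite -tz.
Qed.

(* By induction on n: either infinitely many t ∈ F have
   t^(n-1) ∈ J already, or the (n-1)-th powers of the others form a set Q as
   in nil_family_of_square_nil, or infinitely many of them share the same
   power u, and we recurse with the ideal J ∪ uX¹. *)
Lemma nil_family_of_bounded_powers n J F : is_ideal mul J -> infinite_set F ->
  F `<=` Z -> (forall t, F t -> ~ J t) -> (forall t, F t -> J (sp t n)) ->
  exists J' N, nil_family J' N.
Proof.
elim: n J F => [|n IH] J F idealJ infF FZ F_nJ F_pow.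
  by have [t Ft] := infinite_setN0 infF; case: (F_nJ t Ft (F_pow t Ft)).
case: n => [|n] in IH F_pow *; first exact: nil_family_of_square_nil idealJ infF FZ F_nJ F_pow.
pose G := [set t | F t /\ J (sp t n.+1)].
have [finG|infG] := pselect (finite_set G); last first.
  by apply: (IH J G) => // [t [/FZ]|t [/F_nJ]|t []].
pose F' := F `\` G; have infF' : infinite_set F' by exact: infinite_setD.
have [finV|infV] := pselect (finite_set ((sp ^~ n.+1) @` F')); last first.
  apply: (nil_family_of_square_nil idealJ infV).
  - by move=> _ [t [Ft _] <-]; exact/center_spow/FZ.
  - by move=> _ [t [Ft nGt] <-] Jt; apply: nGt.
  - move=> _ [t [Ft _] <-]; rewrite -spow_add.
    by apply: (ideal_spow idealJ (F_pow t Ft)); lia.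
have [_ [t0 [Ft0 _] <-] inf_fib] := infinite_fiber finV infF'.
set u := sp t0 n.+1 in inf_fib; have Zu : Z u by exact/center_spow/FZ.
apply: (IH (ideal_adjoin J u) (F' `&` (sp ^~ n.+1) @^-1` [set u])) => //.
- exact: ideal_adjoinP.
- by move=> t [[/FZ]].
- move=> t [[Ft _] tu] [Jt|t_div]; first exact: F_nJ Ft Jt.
  have Zt := FZ t Ft; have tu' : sp t n.+1 = u := tu.
  apply: (F_nJ t Ft); apply: (square_divisible_in_ideal idealJ Zt (F_pow t Ft)).
  by apply: (power_divisible_square_divisible (k := n) Zt); right; rewrite tu'.
- by move=> t [_ /= ->]; right; left.
Qed.

Lemma spow_periodic t i d : sp t (i + d.+1) = sp t i ->
  forall r, sp t (i + r * d.+1) = sp t i.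
Proof.
move=> per; elim=> [|r IH]; first by rewrite mul0n addn0.
have -> : i + r.+1 * d.+1 = (i + r * d.+1 + d).+1 by rewrite mulSn; lia.
by rewrite spow_add IH -spow_add -addnS.
Qed.

Lemma spow_inj_before_ideal J t m : is_ideal mul J -> J (sp t m) ->
  (forall j, (j < m)%N -> ~ J (sp t j)) -> {in `I_m &, injective (sp t)}.
Proof.
move=> idealJ Jm m_min.
have lt_neq i j : (i < j)%N -> (j < m)%N -> sp t i <> sp t j.
  move=> ij jm tij; apply: (m_min i (ltn_trans ij jm)).
  have per := @spow_periodic t i (j - i).-1.
  have e : i + (j - i).-1.+1 = j by lia.
  rewrite e in per.
  rewrite -(per (esym tij) m); apply: (ideal_spow idealJ Jm).
  by apply: leq_trans (leq_addl i _); rewrite mulnS leq_addr.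
move=> i j; rewrite !inE /= => im jm tij.
case: (ltngtP i j) => [ij|ji|//]; first by case: (lt_neq i j ij jm tij).
by case: (lt_neq j i ji im (esym tij)).
Qed.

(* Either a fixed
   power works for infinitely many t, or the set Q of central u ∉ E with
   u² ∈ E is infinite: if |Q| ≤ n, take t with t^(2n) ∉ E and the first power
   t^m ∈ E; then t^(m-1), ..., t^(m-1-n) are n+1 distinct elements of Q. *)
Lemma nil_family_of_eventual_powers E T : is_ideal mul E -> infinite_set T ->
  T `<=` Z -> (forall t, T t -> ~ E t) -> (forall t, T t -> exists k, E (sp t k)) ->
  exists J N, nil_family J N.
Proof.
move=> idealE infT TZ T_nE T_pow.
have [[n infTn]|fin_pow] := pselect (exists n, infinite_set [set t | T t /\ E (sp t n)]).
  by apply: (@nil_family_of_bounded_powers n E _ idealE infTn) => // [t [/TZ]|t [/T_nE]|t []].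
pose Q := [set u | Z u /\ ~ E u /\ E (mul u u)].
apply: (@nil_family_of_square_nil E Q idealE) => [/finite_set_leP [n Qn]|u []|u [_ []]|u [_ []]] //.
have [t [Tt nEt]] : exists t, T t /\ ~ E (sp t (n + n)).
  have /infinite_setN0 [t [Tt nEt]] := infinite_setD infT
    (contrapT (fun inf => fin_pow (ex_intro _ (n + n) inf))).
  by exists t; split => // Et; apply: nEt.
have [k Ek] := T_pow t Tt.
case: (ex_minnP (ex_intro (fun k => `[< E (sp t k) >]) k (asboolT Ek))) => m /asboolP Em m_min.
have {}m_min j : (j < m)%N -> ~ E (sp t j).
  by move=> jm Ej; have := m_min j (asboolT Ej); rewrite leqNgt jm.
have nm : (n + n < m)%N.
  by rewrite ltnNge; apply/negP => mn; apply: nEt; exact: ideal_spow idealE Em mn.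
pose g i := sp t (m.-1 - i).
have gQ i : (i < n.+1)%N -> Q (g i).
  move=> ni; split; first exact/center_spow/TZ.
  split; first by apply: m_min; lia.
  by rewrite -spow_add; apply: (ideal_spow idealE Em); lia.
have g_inj : {in `I_n.+1 &, injective g}.
  move=> i j; rewrite !inE /= => ni nj /(spow_inj_before_ideal idealE Em m_min).
  by rewrite !inE /=; lia.
have : `I_n.+1 #<= `I_n.
  apply: card_le_trans Qn; rewrite -(card_le_eql (inj_card_eq g_inj)).
  by apply: subset_card_le => _ [i ni <-]; exact: gQ.
by rewrite card_le_II ltnn.
Qed.

End Semigroup.

Section MaximalSubgroup.
Variables (X : Type) (mul : X -> X -> X) (e : X).
Hypotheses (mulA : assoc_op mul) (idem_e : idempotent_el mul e) (Ze : sg_center mul e).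
Local Notation H := (maxsubgroup mul e).

Definition principal_ideal : set X := [set x | exists y, x = mul e y].

Lemma principal_idealP : is_ideal mul principal_ideal.
Proof.
move=> x _ [w ->]; split; first by exists (mul x w); rewrite mulA -Ze -mulA.
by exists (mul w x); rewrite mulA.
Qed.

Lemma maxsubgroup_sub : H `<=` principal_ideal.
Proof. by move=> x [ex _]; exists x. Qed.

(* A central element of eX some power of which is a unit of eXe is itself a
   unit: if t = et and t^(k+1) y = e, then t (t^k y) = e. *)
Lemma central_root_in_maxsubgroup t : sg_center mul t -> inf_root mul H t ->
  principal_ideal t -> H t.
Proof.
move=> Zt [[|k] Hk] [y ty]; first exact: Hk.
have et : mul e t = t by rewrite ty mulA idem_e.
have [_ [_ [z [ez ze tz zt]]]] := Hk.
split => //; split; first by rewrite Zt.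
exists (mul (spow mul t k) z); split.
- by rewrite mulA Ze -mulA ez.
- by rewrite -mulA ze.
- by rewrite mulA -spowSl.
- by rewrite -mulA -Zt mulA.
Qed.

End MaximalSubgroup.

(* If T
   denotes this set and is infinite, then T avoids the ideal eX while each
   t ∈ T has a power in H_e ⊆ eX; the combinatorial core yields a nil family
   (J, N), and then X/J is not TzS-closed. *)
Theorem lemma7p3 (X : Type) (mul : X -> X -> X) (assocX : assoc_op mul)
  (hX : ideally_TzS_closed mul) (e : X)
  (he : idempotent_el mul e) (hez : sg_center mul e)
  (hb : bounded_on mul (maxsubgroup mul e `&` sg_center mul)) :
  finite_set ((inf_root mul (maxsubgroup mul e) `&` sg_center mul)
               `\` maxsubgroup mul e).
Proof.
apply: contrapT => infT.
have idealE := principal_idealP assocX hez.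
have [J [N nilJN]] : exists J N, nil_family mul J N.
  apply: (nil_family_of_eventual_powers assocX idealE infT).
  - by move=> t [[_ Zt] _].
  - by move=> t [[root_t Zt] nHt] Et; apply/nHt/(central_root_in_maxsubgroup assocX).
  - by move=> t [[[k Hk] _] _]; exists k; exact: maxsubgroup_sub.
have [idealJ _ _ _ _] := nilJN.
exact: (nil_family_rees_not_closed assocX nilJN (hX J idealJ)).
Qed.
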